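(* Let $G$ be a finite Abelian group with identity $1$ and let $A=\{a_1,\ldots,a_t\}$ be a set of generators of $G$ satisfying the triangular relations $$a_1^{k_1}=1,\qquad a_i^{k_i}=a_1^{\lambda_{i,1}}\cdots a_{i-1}^{\lambda_{i,i-1}}\quad (i=2,\ldots,t),$$ where the $\lambda_{i,j}$ are nonnegative integers and, for every $i\in[t]$, $k_i\ge 2$ is the smallest positive integer such that $a_i^{k_i}\in\langle a_1,\ldots,a_{i-1}\rangle$ (for $i=1$ this subgroup is $\{1\}$). Then $G$ is isomorphic to $\Gamma(K,L)$, where $K=(k_i)$ and $L=(\lambda_{i,j})$, via the isomorphism $$\Psi(x_1^{j_1}\cdots x_t^{j_t})=a_1^{j_1}\cdots a_t^{j_t}\qquad (0\le j_i\le k_i-1,\ i\in[t]).$$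
   Context: For positive integers $k_1,\ldots,k_t$ and nonnegative integers $\lambda_{i,j}$ ($2\le i\le t$, $1\le j<i$), let $I$ be the ideal of $\mathbb{R}[x_1,\ldots,x_t]$ generated by $x_1^{k_1}-1$ and $x_i^{k_i}-x_1^{\lambda_{i,1}}\cdots x_{i-1}^{\lambda_{i,i-1}}$ ($i=2,\ldots,t$). The monomial group $\Gamma(K,L)$ is the set of residue classes in $\mathbb{R}[x_1,\ldots,x_t]/I$ of the monomials $x_1^{j_1}\cdots x_t^{j_t}$ with $0\le j_i\le k_i-1$, with the multiplication of the quotient ring (products are reduced to this form using the relations $x_1^{k_1}=1$, $x_i^{k_i}=x_1^{\lambda_{i,1}}\cdots x_{i-1}^{\lambda_{i,i-1}}$). *)

From HB Require Import structures.
From mathcomp Require Import all_boot all_order all_algebra all_fingroup.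
From mathcomp Require Import reals.
From mathcomp Require Import mpoly.

Set Implicit Arguments.
Unset Strict Implicit.
Unset Printing Implicit Defensive.

Import GRing.Theory.
Local Open Scope ring_scope.

(* Exponent vectors are functions j : 'I_t -> nat; index i : 'I_t stands for
   the paper's index i+1.  The box  0 <= j_i <= k_i - 1. *)
Definition in_box (t : nat) (k : 'I_t -> nat) (j : 'I_t -> nat) : Prop :=
  forall i, (j i < k i)%N.

Definition mono (R : comNzRingType) (t : nat) (j : 'I_t -> nat) : {mpoly R[t]} :=
  \prod_(i < t) 'X_i ^+ j i.

Definition gen_poly (R : comNzRingType) (t : nat) (k : 'I_t -> nat)
    (lam : 'I_t -> 'I_t -> nat) (i : 'I_t) : {mpoly R[t]} :=
  'X_i ^+ k i - \prod_(j < t | (j < i)%N) 'X_j ^+ lam i j.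

Definition in_ideal (R : comNzRingType) (t : nat) (k : 'I_t -> nat)
    (lam : 'I_t -> 'I_t -> nat) (p : {mpoly R[t]}) : Prop :=
  exists c : 'I_t -> {mpoly R[t]}, p = \sum_(i < t) c i * gen_poly R k lam i.

Definition Psi (gT : finGroupType) (t : nat) (a : 'I_t -> gT)
    (j : 'I_t -> nat) : gT :=
  (\prod_(i < t) a i ^+ j i)%g.

(* Let H_n be the subgroup generated by a_1, ..., a_n.  As G is abelian and
   a_n^(k_n) lies in H_(n-1), H_n = H_(n-1) <a_n>, so every element of H_n is
   h a_n^e with h in H_(n-1) and 0 <= e < k_n; minimality of k_n makes e
   unique, since two such decompositions would put a power a_n^(e - e') with
   0 < e - e' < k_n into H_(n-1).  Induction on n makes Psi a bijection from
   the box onto G.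
   For multiplicativity, weight each monomial x^m by [Psi(m) = Psi(j'')].  The
   induced linear functional kills the ideal I, because multiplying a monomial
   by x_i^(k_i) or by x_1^(lam_(i,1)) ... x_(i-1)^(lam_(i,i-1)) changes Psi by
   the same group element; evaluated on x^(j + j') - x^(j'') it yields
   [Psi(j + j') = Psi(j'')] - 1 = 0. *)

From HB Require Import structures.
From mathcomp Require Import all_boot all_order all_algebra all_fingroup.
From mathcomp Require Import reals.
From mathcomp Require Import mpoly.

Set Implicit Arguments.
Unset Strict Implicit.
Unset Printing Implicit Defensive.

Import GRing.Theory.
Local Open Scope group_scope.

Section MonomialFunctional.
Local Open Scope ring_scope.
Variables (R : comNzRingType) (n : nat) (w : 'X_{1..n} -> R).

Definition mfunctional (p : {mpoly R[n]}) : R := \sum_(m <- msupp p) p@_m * w m.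

Lemma mfunctional_seq (s : seq 'X_{1..n}) p :
  uniq s -> {subset msupp p <= s} -> mfunctional p = \sum_(m <- s) p@_m * w m.
Proof.
move=> uniq_s supp_s; rewrite (bigID (mem (msupp p))) /=.
rewrite [X in _ + X]big1 ?addr0 => [|m /memN_msupp_eq0 ->]; last by rewrite mul0r.
rewrite -big_filter; apply: perm_big; apply: uniq_perm; rewrite ?filter_uniq //.
by move=> m; rewrite mem_filter andb_idr //; apply: supp_s.
Qed.

Lemma mfunctional_is_scalar : scalar mfunctional.
Proof.
move=> c p q; set s := undup (msupp p ++ msupp q ++ msupp (c *: p + q)).
have sub_s r : {subset msupp r <= msupp p ++ msupp q ++ msupp (c *: p + q)} ->
    mfunctional r = \sum_(m <- s) r@_m * w m.
  by move=> sub_r; apply: mfunctional_seq => [|m /sub_r]; rewrite ?undup_uniq ?mem_undup.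
rewrite !sub_s; try by move=> m; rewrite !mem_cat => ->; rewrite ?orbT.
rewrite mulr_sumr -big_split /=; apply: eq_bigr => m _.
by rewrite mcoeffD mcoeffZ mulrDl mulrA.
Qed.

HB.instance Definition _ :=
  GRing.isLinear.Build R {mpoly R[n]} R *%R mfunctional mfunctional_is_scalar.

Lemma mfunctionalX m : mfunctional 'X_[m] = w m.
Proof. by rewrite /mfunctional msuppX big_seq1 mcoeffX eqxx mul1r. Qed.

Lemma mfunctional_mul_binomial (u v : 'X_{1..n}) :
  (forall m, w (m + u)%MM = w (m + v)%MM) ->
  forall c, mfunctional (c * ('X_[u] - 'X_[v])) = 0.
Proof.
move=> w_uv c; rewrite [c]mpolyE mulr_suml linear_sum big1 // => m _.
by rewrite -scalerAl scalarZ /= mulrBr -!mpolyXD linearB /= !mfunctionalX w_uv subrr mulr0.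
Qed.

End MonomialFunctional.

Section AbelianProducts.
Variables (gT : finGroupType) (G : {group gT}).
Hypothesis abelG : abelian G.

Lemma abelian_bigID (I : Type) (r : seq I) (P Q : pred I) (F : I -> gT) :
  (forall x, F x \in G) ->
  \prod_(x <- r | P x) F x =
    (\prod_(x <- r | P x && Q x) F x) * \prod_(x <- r | P x && ~~ Q x) F x.
Proof.
move=> FG; elim: r => [|x r IHr]; first by rewrite !big_nil mulg1.
rewrite !big_cons; case: (P x); case: (Q x) => /=; rewrite IHr ?mulgA //.
suff -> : commute (F x) (\prod_(y <- r | P y && Q y) F y) by [].
by apply: (centsP abelG); rewrite ?FG ?group_prod.
Qed.

Lemma abelian_big_split (I : Type) (r : seq I) (P : pred I) (F F' : I -> gT) :
  (forall x, F x \in G) -> (forall x, F' x \in G) ->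
  \prod_(x <- r | P x) (F x * F' x) =
    (\prod_(x <- r | P x) F x) * \prod_(x <- r | P x) F' x.
Proof.
move=> FG F'G; elim: r => [|x r IHr]; first by rewrite !big_nil mulg1.
rewrite !big_cons; case: (P x) => //; rewrite IHr -!mulgA; congr (_ * _).
have comm_F'x : commute (F' x) (\prod_(y <- r | P y) F y).
  by apply: (centsP abelG); rewrite ?F'G ?group_prod.
by rewrite !mulgA comm_F'x.
Qed.

End AbelianProducts.

Lemma coset_expg_inj (gT : finGroupType) (H : {group gT}) (x : gT) (k u v : nat)
    (X Y : gT) :
  (forall m, 0 < m < k -> x ^+ m \notin H) -> X \in H -> Y \in H ->
  u < k -> v < k -> X * x ^+ u = Y * x ^+ v -> u = v.
Proof.
move=> xH; wlog le_vu : u v X Y / v <= u => [hw XH YH ltu ltv eqXY|].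
  have [le_vu|/ltnW le_uv] := leqP v u; first exact: (hw u v X Y).
  by apply/esym; apply: (hw v u Y X).
move=> XH YH lt_uk _ eqXY; apply/eqP; rewrite eqn_leq le_vu andbT leqNgt.
apply/negP => lt_vu; have/xH/negP[] : 0 < u - v < k.
  by rewrite subn_gt0 lt_vu (leq_ltn_trans (leq_subr v u)).
have -> : x ^+ (u - v) = X^-1 * Y.
  by apply: (mulIg (x ^+ v)); rewrite -expgD subnK // -mulgA -eqXY mulKg.
by rewrite groupM ?groupV.
Qed.

Section TriangularCoordinates.
Variables (gT : finGroupType) (G : {group gT}) (t : nat) (a : 'I_t -> gT).
Hypotheses (abelG : abelian G) (aG : forall i, a i \in G).

Definition gen_lt (n : nat) : {group gT} := <<[set a j | j : 'I_t & (j < n)]>>%G.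

Definition Psi_lt (n : nat) (j : 'I_t -> nat) : gT :=
  \prod_(l < t | (l < n)) a l ^+ j l.

Lemma gen_lt_subG n : gen_lt n \subset G.
Proof. by rewrite gen_subG; apply/subsetP => _ /imsetP[l _ ->]. Qed.

Lemma gen_lt0 : gen_lt 0 = 1 :> {set gT}.
Proof.
rewrite /gen_lt -gen0; congr <<_>>; apply/setP => x; rewrite inE.
by apply/imsetP => -[l]; rewrite inE.
Qed.

Lemma gen_lt_ord : gen_lt t = <<[set a i | i : 'I_t]>> :> {set gT}.
Proof.
congr <<_>>; apply/setP => x.
by apply/imsetP/imsetP => -[l _ ->]; exists l; rewrite ?inE.
Qed.

Lemma gen_ltS n (lt_nt : n < t) :
  gen_lt n.+1 = gen_lt n * <[a (Ordinal lt_nt)]> :> {set gT}.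
Proof.
set i := Ordinal lt_nt; rewrite /gen_lt /=.
have -> : [set a j | j : 'I_t & (j < n.+1)] =
    [set a j | j : 'I_t & (j < n)] :|: [set a i].
  apply/setP => x; rewrite !inE; apply/imsetP/orP => [[l]|].
    rewrite inE ltnS leq_eqVlt => /orP[/eqP eq_ln|lt_ln] ->.
      by right; rewrite (_ : l = i) //; apply: val_inj.
    by left; apply/imsetP; exists l; rewrite ?inE.
  case=> [/imsetP[l]|/eqP ->]; last by exists i; rewrite ?inE /=.
  by rewrite !inE => /ltnW lt_ln ->; exists l; rewrite ?inE.
rewrite -joingE -joing_idl -joing_idr comm_joingE //.
apply: centC; apply: (centSS (gen_lt_subG n) _ abelG).
by rewrite gen_subG sub1set.
Qed.

Lemma Psi_lt_mem n j : Psi_lt n j \in gen_lt n.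
Proof. by apply: group_prod => l lt_ln; rewrite groupX // mem_gen // imset_f ?inE. Qed.

Lemma eq_Psi_lt n j j' :
  (forall l : 'I_t, (l < n) -> j l = j' l) -> Psi_lt n j = Psi_lt n j'.
Proof. by move=> eq_jj'; apply: eq_bigr => l /eq_jj' ->. Qed.

Lemma Psi_ltS n j (lt_nt : n < t) :
  Psi_lt n.+1 j = Psi_lt n j * a (Ordinal lt_nt) ^+ j (Ordinal lt_nt).
Proof.
rewrite /Psi_lt (abelian_bigID abelG _ _ (fun l : 'I_t => (l < n))) => [|l]; last first.
  by rewrite groupX.
congr (_ * _); first by apply: eq_bigl => l; rewrite andb_idl // => /ltnW.
by rewrite (big_pred1 (Ordinal lt_nt)) // => l; rewrite /= ltnS -leqNgt -eqn_leq.
Qed.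

Lemma Psi_lt_ord j : Psi_lt t j = Psi a j.
Proof. by apply: eq_bigl => l; rewrite ltn_ord. Qed.

Lemma PsiD j j' : Psi a (fun i => j i + j' i) = Psi a j * Psi a j'.
Proof.
rewrite /Psi -(abelian_big_split abelG) => [|l|l]; rewrite ?groupX //.
by apply: eq_bigr => l _; rewrite expgD.
Qed.

Section BoxCoordinates.
Variable k : 'I_t -> nat.

Lemma Psi_lt_inj n j j' :
  (forall (i : 'I_t) m, 0 < m < k i -> a i ^+ m \notin gen_lt i) ->
  n <= t -> in_box k j -> in_box k j' -> Psi_lt n j = Psi_lt n j' ->
  forall l : 'I_t, l < n -> j l = j' l.
Proof.
move=> k_min; elim: n => [//|n IHn] lt_nt box_j box_j'.
set i := Ordinal lt_nt; rewrite !(Psi_ltS _ lt_nt) -/i => eq_jj'.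
have eq_ji : j i = j' i.
  exact: coset_expg_inj (k_min i) (Psi_lt_mem n j) (Psi_lt_mem n j')
    (box_j i) (box_j' i) eq_jj'.
move: eq_jj'; rewrite eq_ji => /mulIg /(IHn (ltnW lt_nt) box_j box_j') eq_lt l.
rewrite ltnS leq_eqVlt => /orP[/eqP eq_ln|/eq_lt //].
by rewrite (_ : l = i) //; apply: val_inj.
Qed.

Lemma Psi_lt_surj n g :
  (forall i, 0 < k i) -> (forall i : 'I_t, a i ^+ k i \in gen_lt i) ->
  n <= t -> g \in gen_lt n -> exists2 j, in_box k j & Psi_lt n j = g.
Proof.
move=> k_gt0 k_rel; elim: n g => [|n IHn] g.
  move=> _; rewrite gen_lt0 => /set1P ->.
  by exists (fun _ => 0); [exact: k_gt0 | rewrite /Psi_lt big1].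
move=> lt_nt; set i := Ordinal lt_nt.
rewrite (gen_ltS lt_nt) -/i => /mulsgP[y _ Hy /cycleP[e ->] ->].
have Hy' : y * (a i ^+ k i) ^+ (e %/ k i) \in gen_lt n.
  by rewrite groupM // groupX //; exact: (k_rel i).
have [j box_j Psi_j] := IHn _ (ltnW lt_nt) Hy'.
exists (fun l => if l == i then e %% k i else j l).
  by move=> l; case: eqP => [->|_]; [rewrite ltn_mod | exact: box_j].
rewrite (Psi_ltS _ lt_nt) -/i eqxx.
rewrite (eq_Psi_lt (j' := j)) => [|l lt_ln]; last first.
  by rewrite ifN //; apply: contraTneq lt_ln => ->; rewrite ltnn.
by rewrite Psi_j -mulgA -expgM mulnC -expgD -divn_eq.
Qed.

End BoxCoordinates.

End TriangularCoordinates.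

Section IdealRelations.
Variables (gT : finGroupType) (G : {group gT}) (t : nat) (a : 'I_t -> gT).
Variables (k : 'I_t -> nat) (lam : 'I_t -> 'I_t -> nat).
Hypotheses (abelG : abelian G) (aG : forall i, a i \in G).
Hypothesis a_rel : forall i : 'I_t, a i ^+ k i = Psi_lt a i (lam i).

Definition lam_mnm (i : 'I_t) : 'X_{1..t} :=
  [multinom if l < i then lam i l else 0 | l < t].

Lemma monoE (R : comNzRingType) (j : 'I_t -> nat) :
  mono R j = 'X_[[multinom j i | i < t]].
Proof. by rewrite mpolyXE_id; apply: eq_bigr => i _; rewrite mnmE. Qed.

Lemma gen_polyE (R : comNzRingType) i :
  gen_poly R k lam i = ('X_[U_(i) *+ k i] - 'X_[lam_mnm i])%R.
Proof.
rewrite /gen_poly -mpolyXn; congr (_ - _)%R.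
by rewrite mpolyXE_id big_mkcond; apply: eq_bigr => l _; rewrite mnmE; case: ifP.
Qed.

Lemma Psi_multinom (j : 'I_t -> nat) : Psi a [multinom j i | i < t] = Psi a j.
Proof. by rewrite /Psi; apply: eq_bigr => i _; rewrite mnmE. Qed.

Lemma Psi_mnmD (m m' : 'X_{1..t}) : Psi a (m + m')%MM = Psi a m * Psi a m'.
Proof. by rewrite -(PsiD abelG aG) /Psi; apply: eq_bigr => i _; rewrite mnmDE. Qed.

Lemma Psi_mnm1_mulmn i : Psi a (U_(i) *+ k i)%MM = a i ^+ k i.
Proof.
rewrite /Psi (eq_bigr (fun l => if l == i then a l ^+ k i else 1)) => [|l _].
  by rewrite -big_mkcond big_pred1_eq.
by rewrite mulmnE mnm1E eq_sym; case: eqP => [->|_]; rewrite ?mul1n.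
Qed.

Lemma Psi_lam_mnm i : Psi a (lam_mnm i) = a i ^+ k i.
Proof.
rewrite a_rel /Psi_lt big_mkcond; apply: eq_bigr => l _.
by rewrite mnmE; case: ifP.
Qed.

Lemma Psi_eq_in_ideal (R : comNzRingType) (j j' : 'I_t -> nat) :
  in_ideal k lam (mono R j - mono R j')%R -> Psi a j = Psi a j'.
Proof.
case=> c eq_c; pose w (m : 'X_{1..t}) : R := ((Psi a m == Psi a j')%:R)%R.
have w_rel i m : w (m + U_(i) *+ k i)%MM = w (m + lam_mnm i)%MM.
  by rewrite /w !Psi_mnmD Psi_mnm1_mulmn Psi_lam_mnm.
have := congr1 (mfunctional w) eq_c.
rewrite linear_sum big1 => [|i _]; last first.
  by rewrite gen_polyE; apply: mfunctional_mul_binomial; exact: w_rel.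
rewrite !monoE linearB /= !mfunctionalX /w !Psi_multinom eqxx.
by case: eqP => // _ /eqP; rewrite sub0r oppr_eq0 oner_eq0.
Qed.

End IdealRelations.

Theorem mainTheorem3 (R : realType) (gT : finGroupType) (G : {group gT})
    (t : nat) (a : 'I_t -> gT) (k : 'I_t -> nat) (lam : 'I_t -> 'I_t -> nat) :
  abelian G ->
  <<[set a i | i : 'I_t]>>%g = G ->
  (forall i : 'I_t, (a i ^+ k i)%g = (\prod_(j < t | (j < i)%N) a j ^+ lam i j)%g) ->
  (forall i : 'I_t, (2 <= k i)%N) ->
  (forall (i : 'I_t) (m : nat), (0 < m < k i)%N ->
      (a i ^+ m)%g \notin <<[set a j | j : 'I_t & (j < i)%N]>>%g) ->
  [/\ (forall j, in_box k j -> Psi a j \in G),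
      (forall j j', in_box k j -> in_box k j' -> Psi a j = Psi a j' -> j =1 j'),
      (forall g, g \in G -> exists2 j, in_box k j & Psi a j = g)
    & (forall j j' j'', in_box k j -> in_box k j' -> in_box k j'' ->
        in_ideal k lam
          (mono R (fun i => (j i + j' i)%N) - mono R j'')%R ->
        Psi a j'' = (Psi a j * Psi a j')%g)].
Proof.
move=> abelG genG a_rel k_ge2 k_min.
have aG i : a i \in G by rewrite -genG mem_gen ?imset_f.
have k_gt0 i : 0 < k i by apply: leq_trans (k_ge2 i).
have k_rel i : a i ^+ k i \in gen_lt a i by rewrite a_rel Psi_lt_mem.
have G_gen_lt : G \subset gen_lt a t by rewrite gen_lt_ord genG.
split.
- by move=> j _; apply: group_prod => i _; rewrite groupX.
- move=> j j' box_j box_j'; rewrite -!Psi_lt_ord => eq_Psi l.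
  exact: (Psi_lt_inj abelG aG k_min (leqnn t) box_j box_j' eq_Psi (ltn_ord l)).
- move=> g /(subsetP G_gen_lt) /(Psi_lt_surj abelG aG k_gt0 k_rel (leqnn t))[j box_j].
  by rewrite Psi_lt_ord; exists j.
- move=> j j' j'' _ _ _ /(Psi_eq_in_ideal abelG aG a_rel) <-.
  exact: (PsiD abelG aG j j').
Qed.
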